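(* Let $k\subset L$ be a finite cyclic field extension, with $r:=[L:k]=\prod_{i=1}^mp_i^{\alpha_i}$ where the $p_i$ are distinct primes and $\alpha_i\geq 1$. Let $\mathbb D_r$ be the set of positive divisors of $r$ and $\mathcal A$ the set of atoms of $[k,L]$. Then: (1) For each $i\in\{1,\ldots,m\}$ there is a unique $A_i\in\mathcal A$ with $[A_i:k]=p_i$; and $T\in[k,L]$ lies in $\mathcal A$ if and only if $[T:k]=p_i$ for some $i$. (2) $\mathcal S[k,L]=\prod_{i=1}^mA_i$. (3) Let $\alpha:=\sup\{\alpha_i\}$ and let $\{S_j\}_{j=0}^n$ be the Loewy series of $k\subset L$. For $j\in\{0,\ldots,n\}$, $[S_j:k]=\prod_{i=1}^mp_i^{\beta_i}$ where $\beta_i=\alpha_i$ if $\alpha_i<j$ and $\beta_i=j$ if $\alpha_i\geq j$. Moreover, $T\in[k,L]$ is an atom of $[S_j,S_{j+1}]$ if and only if $[T:k]=\prod_{i=1}^mp_i^{\gamma_i}$ where there is an index $i_0$ with $\beta_{i_0}<\alpha_{i_0}$ such that $\gamma_{i_0}=\beta_{i_0}+1$ and $\gamma_i=\beta_i$ for $i\neq i_0$. In particular $\alpha=n$. (4) $S_j\subset S_{j+1}$ is Boolean for each $j\in\{0,\ldots,n-1\}$. (5) For $T\in[k,L]$ with $T\neq k$: $T$ is $\Pi$-irreducible in $[k,L]$ if and only if $[T:k]=p_i^{\beta}$ for some $i\in\{1,\ldots,m\}$ and some $\beta\in\{1,\ldots,\alpha_i\}$. (6) $|[k,L]|=\mathrm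 d([L:k])=\prod_{i=1}^m(\alpha_i+1)=|\mathbb D_r|$, where $\mathrm d$ is the number of divisors. If $\mathcal A_j$ denotes the set of atoms of $[S_j,S_{j+1}]$, then $\ell[k,L]=\sum_{j=0}^{\alpha-1}|\mathcal A_j|=\sum_{i=1}^m\alpha_i$, which is the number of $\Pi$-irreducible elements of $[k,L]$ different from $k$. (7) The following are equivalent: (a) $k\subset L$ is a $\mathcal P$-extension; (b) $k\subset L$ is either Boolean or a chain; (c) either $m=1$ or $\alpha=1$.
   Context: For a field extension $k\subseteq L$, $[k,L]$ is the lattice of intermediate fields (meet = intersection, join = compositum $TU$). $K\subset K'$ is minimal if $[K,K']=\{K,K'\}$; an atom of $[K,K'']$ is $K'$ with $K\subset K'$ minimal and $K'\subseteq K''$. The socle $\mathcal S[K,L]$ is the compositum of all atoms of $[K,L]$; the Loewy series of $k\subset L$ is $S_0=k$, $S_{j+1}=\mathcal S[S_j,L]$ while $S_j\neq L$, with $n$ least such that $S_n=L$. $\ell[k,L]$ is the supremum of lengths of chains in $[k,L]$. The extension $K\subseteq K'$ is Boolean if $[K,K']$ is a distributive lattice in which every element $V$ has a complement $V'$ ($V\cap V'=K$, $VV'=K'$). $k\subset L$ is a $\mathcal P$-extension if $[k,L]=\bigcup_{j=0}^{n-1}[S_j,S_{j+1}]$. An element $T\in[k,L]$ is $\Pi$-irreducible if $T=T_1T_2$ with $T_1,T_2\in[k,L]$ implies $T=T_1$ or $T=T_2$. *)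

From HB Require Import structures.
From mathcomp Require Import all_boot all_order all_algebra all_fingroup all_solvable all_field.
From Stdlib Require Import ClassicalEpsilon.
Set Implicit Arguments. Unset Strict Implicit. Unset Printing Implicit Defensive.
Import GRing.Theory.
Local Open Scope ring_scope.

(* The interval [K, E] consists of the subfields T of L with K <= T <= E;
   meet = intersection (T :&: U)%AS, join = compositum (T * U)%AS. *)
Section FieldLattice.
Variables (F : fieldType) (L : fieldExtType F).
Implicit Types K E T U V : {subfield L}.

Definition in_interval K E T : Prop := (K <= T)%VS /\ (T <= E)%VS.

Definition sub_strict K E : Prop := (K <= E)%VS /\ K <> E.

Definition minimal_ext K K' : Prop :=
  sub_strict K K' /\ forall T, in_interval K K' T -> T = K \/ T = K'.

Definition atom K E A : Prop := minimal_ext K A /\ (A <= E)%VS.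

(* S is the compositum of all atoms of [K, E] (the compositum of the empty
   family being K): the smallest subfield containing K and all atoms. *)
Definition is_socle K E S : Prop :=
  (K <= S)%VS /\ (forall A, atom K E A -> (A <= S)%VS) /\
  (forall T, (K <= T)%VS -> (forall A, atom K E A -> (A <= T)%VS) -> (S <= T)%VS).

Definition socle K E : {subfield L} :=
  epsilon (inhabits K) (is_socle K E).

Fixpoint loewy K E (j : nat) : {subfield L} :=
  match j with
  | 0 => K
  | j'.+1 => socle (loewy K E j') E
  end.

Definition loewy_length K E (n : nat) : Prop :=
  loewy K E n = E /\ forall j, (j < n)%N -> loewy K E j <> E.

Definition boolean_ext K E : Prop :=
  (forall T U V, in_interval K E T -> in_interval K E U -> in_interval K E V ->
     (T :&: (U * V))%AS = ((T :&: U) * (T :&: V))%AS /\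
     (T * (U :&: V))%AS = ((T * U) :&: (T * V))%AS) /\
  (forall V, in_interval K E V ->
     exists V', in_interval K E V' /\ (V :&: V')%AS = K /\ (V * V')%AS = E).

Definition chain_ext K E : Prop :=
  forall T U, in_interval K E T -> in_interval K E U -> (T <= U)%VS \/ (U <= T)%VS.

Definition P_ext K E : Prop :=
  exists n, loewy_length K E n /\
    forall T, in_interval K E T ->
      exists j, (j < n)%N /\ in_interval (loewy K E j) (loewy K E j.+1) T.

Definition pi_irreducible K E T : Prop :=
  forall T1 T2, in_interval K E T1 -> in_interval K E T2 ->
    T = (T1 * T2)%AS -> T = T1 \/ T = T2.

Definition has_chain K E (l : nat) : Prop :=
  exists c : nat -> {subfield L},
    (forall i, (i <= l)%N -> in_interval K E (c i)) /\
    (forall i, (i < l)%N -> sub_strict (c i) (c i.+1)).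

Definition lattice_length K E (l : nat) : Prop :=
  has_chain K E l /\ forall l', has_chain K E l' -> (l' <= l)%N.

Definition card_subfields (P : {subfield L} -> Prop) (c : nat) : Prop :=
  exists s : seq {subfield L}, uniq s /\ (forall T, T \in s <-> P T) /\ size s = c.

End FieldLattice.

From HB Require Import structures.
From mathcomp Require Import all_boot all_order all_algebra all_fingroup all_solvable all_field.
From mathcomp Require Import zify.
From Stdlib Require Import ClassicalEpsilon.
Set Implicit Arguments. Unset Strict Implicit. Unset Printing Implicit Defensive.

(* By the Galois correspondence, [K, E] is anti-isomorphic to the subgroup
   lattice of the cyclic group Gal(E/K) of order r, which is in turn
   anti-isomorphic to the divisor lattice of r.  Hence T |-> [T:K] is a lattice
   isomorphism from [K, E] onto the divisors of r, and writing
   [T:K] = prod_p p^(e_p T), the interval becomes the box of exponent vectors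
   0 <= e_p <= alpha_p = v_p(r), ordered componentwise, with intersection and
   compositum given by min and max.  In the box, the atoms above e are the
   vectors e + delta_p, so the socle of e is min(e + 1, alpha) and the j-th
   Loewy layer is min(j, alpha); every statement of the theorem then becomes
   a counting or order statement about this box. *)

Definition pprod (s : seq nat) (v : nat -> nat) := (\prod_(p <- s) p ^ v p)%N.

Lemma pprod_cons p s v : pprod (p :: s) v = (p ^ v p * pprod s v)%N.
Proof. by rewrite /pprod big_cons. Qed.

Lemma pprod_gt0 s v : all prime s -> 0 < pprod s v.
Proof.
elim: s => [|p s IHs] /=; first by rewrite /pprod big_nil.
by case/andP=> /prime_gt0 p_gt0 /IHs; rewrite pprod_cons muln_gt0 expn_gt0 p_gt0.
Qed.

Lemma logn_pprod s v q : uniq s -> all prime s ->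
  logn q (pprod s v) = if q \in s then v q else 0.
Proof.
elim: s => [|p s IHs] /=; first by rewrite /pprod big_nil logn1.
case/andP=> p_s s_uniq /andP[p_pr s_pr].
rewrite pprod_cons lognM ?pprod_gt0 ?expn_gt0 ?prime_gt0 // lognX logn_prime //.
rewrite IHs // in_cons; case: eqP => [->|_] /=; last by rewrite muln0.
by rewrite (negbTE p_s) muln1 addn0.
Qed.

Lemma pprod_logn r d : 0 < r -> d %| r -> pprod (primes r) (logn^~ d) = d.
Proof.
move=> r_gt0 d_r; have d_gt0 := dvdn_gt0 r_gt0 d_r.
apply: eqn_from_log; rewrite ?pprod_gt0 ?all_prime_primes // => q.
rewrite logn_pprod ?primes_uniq ?all_prime_primes //.
case: ifP => // q_r; apply/esym/eqP; rewrite -leqn0 leqNgt logn_gt0.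
apply: contraFN q_r; rewrite !mem_primes r_gt0 => /and3P[-> _ q_d].
exact: dvdn_trans q_d d_r.
Qed.

Lemma dvdn_pprod s v w : {in s, forall p, v p <= w p} -> pprod s v %| pprod s w.
Proof.
elim: s => [|p s IHs] le_vw; first by rewrite /pprod !big_nil.
rewrite !pprod_cons dvdn_mul ?dvdn_exp2l ?le_vw ?mem_head // IHs // => q q_s.
by rewrite le_vw // in_cons q_s orbT.
Qed.

Lemma eq_pprod s v w : uniq s -> all prime s ->
  pprod s v = pprod s w <-> {in s, v =1 w}.
Proof.
move=> s_uniq s_pr; split=> [eq_vw q q_s | eq_vw].
  by have := logn_pprod v q s_uniq s_pr; rewrite eq_vw logn_pprod // q_s.
by apply: eq_big_seq => p /eq_vw ->.
Qed.

Fixpoint pprod_box (s : seq nat) (a : nat -> nat) : seq nat :=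
  if s is p :: s' then
    [seq (p ^ i * d)%N | i <- iota 0 (a p).+1, d <- pprod_box s' a]
  else [:: 1%N].

Lemma pprod_box_cons p s a : pprod_box (p :: s) a =
  [seq (p ^ i * d)%N | i <- iota 0 (a p).+1, d <- pprod_box s a].
Proof. by []. Qed.
Arguments pprod_box : simpl never.

Lemma size_pprod_box s a : size (pprod_box s a) = (\prod_(p <- s) (a p).+1)%N.
Proof.
elim: s => [|p s IHs]; first by rewrite big_nil.
rewrite big_cons -IHs -(size_iota 0 (a p).+1).
exact: (size_allpairs (fun i d => (p ^ i * d)%N)).
Qed.

Lemma mem_pprod_box s a d : uniq s ->
  d \in pprod_box s a <-> exists2 v, {in s, forall p, v p <= a p} & d = pprod s v.
Proof.
elim: s d => [|p s IHs] d.
  move=> _; rewrite inE; split=> [/eqP ->|[v _ ->]]; last by rewrite /pprod big_nil.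
  by exists (fun _ => 0%N); rewrite // /pprod big_nil.
rewrite pprod_box_cons [uniq _]/= => /andP[p_s s_uniq]; split.
  case/allpairsP=> [[i e] [i_a e_box ->]].
  rewrite mem_iota /= ltnS in i_a; simpl in e_box |- *.
  have [v le_va ->] := (IHs e s_uniq).1 e_box.
  exists (fun q => if q == p then i else v q).
    move=> q; rewrite in_cons; case: eqP => [-> _|_ /= q_s]; last exact: le_va.
    by [].
  rewrite pprod_cons eqxx; congr (_ * _)%N; apply: eq_big_seq => q q_s.
  by case: eqP => // eq_qp; rewrite -eq_qp q_s in p_s.
case=> v le_va ->; apply/allpairsP; exists (v p, pprod s v); split.
- by rewrite mem_iota /= ltnS le_va ?mem_head.
- by apply/IHs => //; exists v => // q q_s; rewrite le_va // in_cons q_s orbT.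
- by rewrite pprod_cons.
Qed.

Lemma uniq_pprod_box s a : uniq s -> all prime s -> uniq (pprod_box s a).
Proof.
elim: s => [|p s IHs] // /andP[p_s s_uniq] /andP[p_pr s_pr].
rewrite pprod_box_cons; apply: allpairs_uniq; rewrite ?iota_uniq ?IHs //.
move=> [i d] [j e] /allpairsP[[i1 d1] [_ d1_box [-> ->]]].
move=> /allpairsP[[j1 e1] [_ e1_box [-> ->]]] /= eq_ij.
have [v _ d1E] := (mem_pprod_box a d1 s_uniq).1 d1_box.
have [w _ e1E] := (mem_pprod_box a e1 s_uniq).1 e1_box.
have lognE x u : logn p (p ^ x * pprod s u) = x.
  rewrite lognM ?pprod_gt0 ?expn_gt0 ?prime_gt0 // lognX logn_prime // eqxx.
  by rewrite logn_pprod // (negbTE p_s) muln1 addn0.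
have eq_ij1 : i1 = j1 by rewrite -(lognE i1 v) -d1E eq_ij e1E lognE.
subst j1; congr (_, _); apply/eqP.
have pi1_gt0 : 0 < p ^ i1 by rewrite expn_gt0 prime_gt0.
by rewrite -(eqn_pmul2l pi1_gt0) eq_ij.
Qed.

Lemma size_divisors r : 0 < r ->
  size (divisors r) = (\prod_(p <- primes r) (logn p r).+1)%N.
Proof.
move=> r_gt0; rewrite -size_pprod_box; apply/perm_size/uniq_perm.
- exact: divisors_uniq.
- by rewrite uniq_pprod_box ?primes_uniq ?all_prime_primes.
move=> d; rewrite -dvdn_divisors //; apply/idP/idP => [d_r|].
  apply/mem_pprod_box; rewrite ?primes_uniq //; exists (logn^~ d).
    by move=> p _; apply: dvdn_leq_log.
  by rewrite pprod_logn.
case/mem_pprod_box=> [|v le_v ->]; first exact: primes_uniq.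
by rewrite -{2}(pprod_logn r_gt0 (dvdnn r)); apply: dvdn_pprod.
Qed.

Lemma size_seq1 (T : Type) (s : seq T) : size s = 1 -> exists x, s = [:: x].
Proof. by case: s => [|x []] // _; exists x. Qed.

Lemma uniq_exists_neq (T : eqType) (s : seq T) x : x \in s -> uniq s -> size s != 1 ->
  exists2 y, y \in s & y != x.
Proof.
case: s => [|y [|z s]] //= x_s /andP[]; rewrite in_cons negb_or => /andP[neq_yz _] _ _.
have [eq_xy | neq_xy] := eqVneq x y; last by exists y; rewrite ?mem_head // eq_sym.
by exists z; rewrite ?in_cons ?eqxx ?orbT // eq_xy eq_sym.
Qed.

Lemma count_sum_nat (T : Type) (a : pred T) s : count a s = (\sum_(x <- s) a x)%N.
Proof. by rewrite -sum1_count big_mkcond. Qed.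

Lemma sum_ord_ltn n m : (\sum_(j < n) (j < m : nat))%N = minn m n.
Proof.
elim: n => [|n IHn]; first by rewrite big_ord0 minn0.
by rewrite big_ord_recr /= IHn; case: ltnP => ?; lia.
Qed.

Lemma sum_count_ltn_logn r :
  (\sum_(j < \max_(p <- primes r) logn p r) count (fun p => j < logn p r) (primes r))%N =
  (\sum_(p <- primes r) logn p r)%N.
Proof.
rewrite (eq_bigr (fun j : 'I__ => \sum_(p <- primes r) (j < logn p r : nat))%N); last first.
  by move=> j _; rewrite count_sum_nat.
rewrite exchange_big /=; apply: eq_big_seq => p pP.
by rewrite sum_ord_ltn; apply/minn_idPl; apply: (@leq_bigmax_seq _ _ xpredT (logn^~ r)).
Qed.

Section SubfieldLattice.
Variables (F : fieldType) (L : fieldExtType F).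
Implicit Types A T U : {subfield L}.

Lemma dim_sup_gt0 A T : (A <= T)%VS -> 0 < \dim_A T.
Proof.
move=> sAT; have dimT_gt0 := adim_gt0 T.
by rewrite (dim_sup_field sAT) muln_gt0 in dimT_gt0; case/andP: dimT_gt0.
Qed.

Lemma dim_tower A T U : (A <= T)%VS -> (T <= U)%VS ->
  \dim_A U = (\dim_A T * \dim_T U)%N.
Proof.
move=> sAT sTU; rewrite [in LHS](dim_sup_field sTU).
by rewrite [in X in (_ * X)%N %/ _](dim_sup_field sAT) mulnA mulnK ?adim_gt0 // mulnC.
Qed.

Lemma in_interval_trans A B T U X :
  in_interval A B T -> in_interval A B U -> in_interval T U X -> in_interval A B X.
Proof.
move=> [sAT _] [_ sUB] [sTX sXU].
by split; [exact: subv_trans sAT sTX | exact: subv_trans sXU sUB].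
Qed.

Lemma socleE (K E S : {subfield L}) : is_socle K E S -> socle K E = S.
Proof.
move=> S_socle; have := epsilon_spec (inhabits K) (is_socle K E) (ex_intro _ S S_socle).
rewrite -/(socle K E) => -[sK_socle [atom_socle socle_min]].
case: S_socle => [sKS [atom_S S_min]].
by apply: val_inj; apply: subv_anti; rewrite S_min ?socle_min.
Qed.

Lemma big_prodv_aspace (A : nat -> {subfield L}) s : exists B : {subfield L},
  (B : {vspace L}) = (\big[@prodv F L/1%VS]_(p <- s) (A p : {vspace L}))%VS.
Proof.
elim: s => [|p s [B defB]]; first by exists 1%AS; rewrite big_nil.
by exists (A p * B)%AS; rewrite big_cons -defB.
Qed.

Lemma big_prodv_sub (A : nat -> {subfield L}) s T :
  {in s, forall p, (A p <= T)%VS} ->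
  (\big[@prodv F L/1%VS]_(p <- s) (A p : {vspace L}) <= T)%VS.
Proof.
elim: s => [|p s IHs] sAT; first by rewrite big_nil sub1v.
rewrite big_cons prodv_sub ?sAT ?mem_head // IHs // => q q_s.
by rewrite sAT // in_cons q_s orbT.
Qed.

Lemma subv_big_prodv (A : nat -> {subfield L}) s p : p \in s ->
  (A p <= \big[@prodv F L/1%VS]_(q <- s) (A q : {vspace L}))%VS.
Proof.
elim: s => [|q s IHs] //; rewrite in_cons big_cons.
have [B defB] := big_prodv_aspace A s; rewrite -defB in IHs *.
case: eqP => [-> _|_ /= p_s]; first exact: field_subvMr.
exact: subv_trans (IHs p_s) (field_subvMl _ _).
Qed.

End SubfieldLattice.

Section CyclicExtension.
Variables (F : fieldType) (L : splittingFieldType F) (K E : {subfield L}).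
Hypotheses (sKE : (K <= E)%VS) (nKE : K <> E) (galKE : galois K E)
  (cycG : cyclic 'Gal(E / K)).
Implicit Types T U V W : {subfield L}.

Local Notation r := (\dim_K E).
Local Notation P := (primes (\dim_K E)).
Local Notation I := (in_interval K E).
Local Notation alpha := (\max_(p <- P) logn p r)%N.

Lemma degree_gt0 : 0 < r. Proof. exact: dim_sup_gt0. Qed.

Lemma degree_gt1 : 1 < r.
Proof.
rewrite ltn_neqAle degree_gt0 andbT; apply/eqP=> r1; apply: nKE.
have := dim_sup_field sKE; rewrite -r1 mul1n => dimE.
by apply: val_inj; apply/eqP; rewrite -(geq_leqif (dimv_leqif_eq sKE)) dimE.
Qed.

Lemma primes_degree_exists : exists p, p \in P.
Proof.
have : P != [::] by rewrite primes_eq0 -leqNgt degree_gt1.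
by case: (primes r) => // p s _; exists p; rewrite mem_head.
Qed.

Lemma interval_K : I K. Proof. by split. Qed.
Lemma interval_E : I E. Proof. by split. Qed.

Lemma interval_galois T : I T -> galois T E.
Proof. by case=> sKT sTE; apply: galoisS galKE; rewrite sKT sTE. Qed.

Lemma dim_interval_dvdn T : I T -> \dim_K T %| r.
Proof. by case=> sKT sTE; rewrite (dim_tower sKT sTE) dvdn_mulr. Qed.

(* Cyclicity enters here: subgroups of a cyclic group are ordered by
   divisibility of their orders. *)
Lemma interval_subv_dvdn T U : I T -> I U -> (T <= U)%VS <-> \dim_K T %| \dim_K U.
Proof.
move=> iT iU; have [[sKT sTE] [sKU sUE]] := (iT, iU).
split=> [sTU|/dvdnP[k dimU]]; first by rewrite (dim_tower sKT sTU) dvdn_mulr.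
have [galTE galUE] := (interval_galois iT, interval_galois iU).
rewrite -(galois_fixedField galTE) -(galois_fixedField galUE); apply: fixedFieldS.
rewrite -(cardSg_cyclic cycG (galS E sKU) (galS E sKT)) -!galois_dim //.
apply/dvdnP; exists k; apply/eqP.
rewrite -(eqn_pmul2l (dim_sup_gt0 sKT)) -(dim_tower sKT sTE) (dim_tower sKU sUE).
by rewrite dimU mulnCA mulnA.
Qed.

Lemma interval_exists_dim d : d %| r -> exists2 T, I T & \dim_K T = d.
Proof.
move=> d_r; have d_gt0 := dvdn_gt0 degree_gt0 d_r.
case/cyclicP: cycG => a defG.
have ord_a : #[a]%g = r by rewrite orderE -defG galois_dim.
have sGd : <[(a ^+ d)%g]>%G \subset 'Gal(E / K)%g by rewrite defG cycleX.
exists (fixedField <[(a ^+ d)%g]>%G); first split.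
- by rewrite -galois_connection.
- exact: fixedField_bound.
have rd_gt0 : 0 < r %/ d by rewrite divn_gt0 // dvdn_leq // degree_gt0.
rewrite dim_fixed_galois // -divgS // -orderE orderXdiv ord_a //.
by rewrite -galois_dim // -{1}(divnK d_r) mulKn.
Qed.

Definition dexp T p := logn p (\dim_K T).

Definition in_box (v : nat -> nat) := {in P, forall p, v p <= logn p r}.

Lemma dim_dexp T : I T -> \dim_K T = pprod P (dexp T).
Proof. by move=> iT; rewrite /dexp pprod_logn ?degree_gt0 ?dim_interval_dvdn. Qed.

Lemma dexp_in_box T : I T -> in_box (dexp T).
Proof.
by move=> iT p _; apply: dvdn_leq_log; rewrite ?degree_gt0 ?dim_interval_dvdn.
Qed.

Lemma dexp_K : {in P, dexp K =1 fun=> 0}.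
Proof. by move=> p _; rewrite /dexp divnn adim_gt0 logn1. Qed.

Lemma interval_subv_dexp T U : I T -> I U ->
  (T <= U)%VS <-> {in P, forall p, dexp T p <= dexp U p}.
Proof.
move=> iT iU; rewrite (interval_subv_dvdn iT iU); split=> [le_TU p _|le_TU].
  by apply: dvdn_leq_log; rewrite // dim_sup_gt0 //; case: iU.
by rewrite (dim_dexp iT) (dim_dexp iU); apply: dvdn_pprod.
Qed.

Lemma interval_exists_dexp v : in_box v -> exists2 T, I T & {in P, dexp T =1 v}.
Proof.
move=> v_box; have : pprod P v %| r.
  by rewrite -{2}(pprod_logn degree_gt0 (dvdnn r)); apply: dvdn_pprod.
case/interval_exists_dim=> T iT dimT; exists T => // p pP.
by rewrite /dexp dimT logn_pprod ?pP ?primes_uniq ?all_prime_primes.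
Qed.

Lemma interval_eq_dexp T U : I T -> I U -> T = U <-> {in P, dexp T =1 dexp U}.
Proof.
move=> iT iU; split=> [-> // | eq_TU].
apply: val_inj; apply/eqP; rewrite eqEsubv.
apply/andP; split; [apply/(interval_subv_dexp iT iU) | apply/(interval_subv_dexp iU iT)];
  by move=> p pP; rewrite eq_TU.
Qed.

Lemma dim_interval_pprod T w : I T -> \dim_K T = pprod P w <-> {in P, dexp T =1 w}.
Proof.
move=> iT; rewrite (dim_dexp iT).
by apply: eq_pprod; rewrite ?primes_uniq ?all_prime_primes.
Qed.

Lemma interval_strict_dexp T U : I T -> I U -> (T <= U)%VS -> T <> U ->
  exists2 p, p \in P & dexp T p < dexp U p.
Proof.
move=> iT iU sTU nTU; have le_TU := (interval_subv_dexp iT iU).1 sTU.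
have [/hasP // | /hasPn ge_TU] := boolP (has (fun p => dexp T p < dexp U p) P).
case: nTU; apply/(interval_eq_dexp iT iU) => p pP.
by apply/eqP; rewrite eqn_leq le_TU // leqNgt ge_TU.
Qed.

Definition field_of v := epsilon (inhabits K) (fun T => I T /\ {in P, dexp T =1 v}).

Lemma field_ofP v : in_box v -> I (field_of v) /\ {in P, dexp (field_of v) =1 v}.
Proof.
case/interval_exists_dexp=> T iT dexpT.
exact: (epsilon_spec (inhabits K) (fun T => I T /\ _) (ex_intro _ T (conj iT dexpT))).
Qed.

Lemma delta_in_box p k : k <= logn p r -> in_box (fun q => k * (q == p)).
Proof. by move=> le_k q qP; case: eqP => [->|_]; rewrite ?muln1 ?muln0. Qed.

Lemma interval_cap T U : I T -> I U -> I (T :&: U)%AS.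
Proof.
case=> sKT sTE [sKU _]; split; first by rewrite subv_cap sKT sKU.
exact: subv_trans (capvSl _ _) sTE.
Qed.

Lemma interval_prod T U : I T -> I U -> I (T * U)%AS.
Proof.
case=> sKT sTE [_ sUE]; split; last exact: prodv_sub.
exact: subv_trans sKT (field_subvMr _ _).
Qed.

Lemma dexp_cap T U : I T -> I U ->
  {in P, forall p, dexp (T :&: U)%AS p = minn (dexp T p) (dexp U p)}.
Proof.
move=> iT iU; have iTU := interval_cap iT iU.
have [W iW dexpW] : exists2 W, I W & {in P, dexp W =1 fun p => minn (dexp T p) (dexp U p)}.
  by apply: interval_exists_dexp => p pP; rewrite geq_min dexp_in_box.
have sWT : (W <= T)%VS by apply/(interval_subv_dexp iW iT) => p pP; rewrite dexpW ?geq_minl.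
have sWU : (W <= U)%VS by apply/(interval_subv_dexp iW iU) => p pP; rewrite dexpW ?geq_minr.
have /(interval_subv_dexp iW iTU) le_W : (W <= T :&: U)%VS by rewrite subv_cap sWT sWU.
have /(interval_subv_dexp iTU iT) le_T := capvSl T U.
have /(interval_subv_dexp iTU iU) le_U := capvSr T U.
by move=> p pP; apply/eqP; rewrite eqn_leq leq_min le_T ?le_U //= -dexpW ?le_W.
Qed.

Lemma dexp_prod T U : I T -> I U ->
  {in P, forall p, dexp (T * U)%AS p = maxn (dexp T p) (dexp U p)}.
Proof.
move=> iT iU; have iTU := interval_prod iT iU.
have [W iW dexpW] : exists2 W, I W & {in P, dexp W =1 fun p => maxn (dexp T p) (dexp U p)}.
  by apply: interval_exists_dexp => p pP; rewrite geq_max !dexp_in_box.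
have sTW : (T <= W)%VS by apply/(interval_subv_dexp iT iW) => p pP; rewrite dexpW ?leq_maxl.
have sUW : (U <= W)%VS by apply/(interval_subv_dexp iU iW) => p pP; rewrite dexpW ?leq_maxr.
have /(interval_subv_dexp iTU iW) le_W := prodv_sub sTW sUW.
have /(interval_subv_dexp iT iTU) le_T := field_subvMr T U.
have /(interval_subv_dexp iU iTU) le_U := field_subvMl T U.
by move=> p pP; apply/eqP; rewrite eqn_leq geq_max le_T ?le_U // andbT -dexpW ?le_W.
Qed.


Lemma minimal_dexp T U : I T -> I U -> minimal_ext T U <->
  exists2 p0, p0 \in P & {in P, forall p, dexp U p = dexp T p + (p == p0)}.
Proof.
move=> iT iU; split=> [[[sTU nTU] minTU] | [p0 p0P dexpU]].
  have le_TU := (interval_subv_dexp iT iU).1 sTU.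
  have [p0 p0P lt_TU] := interval_strict_dexp iT iU sTU nTU; exists p0 => //.
  have le_step : {in P, forall p, dexp T p + (p == p0) <= dexp U p}.
    by move=> p pP; case: eqP => [->|_]; rewrite ?addn1 ?addn0 ?le_TU.
  have step_box : in_box (fun p => dexp T p + (p == p0)).
    by move=> p pP; exact: leq_trans (le_step p pP) (dexp_in_box iU pP).
  have [W iW dexpW] := interval_exists_dexp step_box.
  have sTW : (T <= W)%VS.
    by apply/(interval_subv_dexp iT iW) => p pP; rewrite dexpW ?leq_addr.
  have sWU : (W <= U)%VS by apply/(interval_subv_dexp iW iU) => p pP; rewrite dexpW ?le_step.
  case: (minTU W (conj sTW sWU)) => eqW; last by move=> p pP; rewrite -eqW dexpW.
  by have := dexpW p0 p0P; rewrite eqW eqxx addn1 => /n_Sn.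
have sTU : (T <= U)%VS.
  by apply/(interval_subv_dexp iT iU) => p pP; rewrite dexpU ?leq_addr.
split; first split=> // eqTU.
  by have := dexpU p0 p0P; rewrite eqTU eqxx addn1 => /n_Sn.
move=> W iTUW; have iW := in_interval_trans iT iU iTUW; case: iTUW => sTW sWU.
have le_TW := (interval_subv_dexp iT iW).1 sTW.
have le_WU := (interval_subv_dexp iW iU).1 sWU.
have [eq0|neq0] := eqVneq (dexp W p0) (dexp T p0); [left|right];
  apply/(interval_eq_dexp iW _) => // p pP; have := le_TW p pP; have := le_WU p pP;
  rewrite dexpU //; case: (eqVneq p p0) => [->|_]; rewrite ?addn1 ?addn0; lia.
Qed.

Lemma socle_dexp T : I T -> I (socle T E) /\
  {in P, forall p, dexp (socle T E) p = minn (dexp T p).+1 (logn p r)}.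
Proof.
move=> iT; have [W iW dexpW] := @interval_exists_dexp
  (fun p => minn (dexp T p).+1 (logn p r)) (fun p _ => geq_minr _ _).
suff /socleE -> : is_socle T E W by [].
have [sKT sTE] := iT.
have step_box p : p \in P -> dexp T p < logn p r -> in_box (fun q => dexp T q + (q == p)).
  by move=> pP lt_p q qP; case: eqP => [->|_]; rewrite ?addn1 ?addn0 ?dexp_in_box.
split; [|split].
- by apply/(interval_subv_dexp iT iW) => p pP; rewrite dexpW // leq_min leqnSn dexp_in_box.
- move=> B [minTB sBE]; have iB : I B by split; [exact: subv_trans sKT minTB.1.1|].
  have [p0 p0P dexpB] := (minimal_dexp iT iB).1 minTB.
  apply/(interval_subv_dexp iB iW) => p pP; rewrite dexpW // leq_min dexp_in_box // andbT.
  by rewrite dexpB //; case: (p == p0); rewrite ?addn1 ?addn0.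
(* X need not lie in E, so compare W with X :&: E instead. *)
move=> X sTX atoms_X; have iXE : I (X :&: E)%AS.
  by split; [rewrite subv_cap (subv_trans sKT sTX) sKE | exact: capvSr].
have /(interval_subv_dexp iT iXE) le_TXE : (T <= X :&: E)%VS by rewrite subv_cap sTX.
apply: subv_trans (capvSl X E); apply/(interval_subv_dexp iW iXE) => p pP.
rewrite dexpW //; case: (ltnP (dexp T p) (logn p r)) => [lt_p|ge_p].
  have [B iB dexpB] := interval_exists_dexp (step_box p pP lt_p).
  have atomB : atom T E B by split; [apply/(minimal_dexp iT iB); exists p | case: iB].
  have /(interval_subv_dexp iB iXE) le_B : (B <= X :&: E)%VS.
    by rewrite subv_cap atoms_X //; case: iB.
  by apply: leq_trans (geq_minl _ _) _; have := le_B p pP; rewrite dexpB // eqxx addn1.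
exact: leq_trans (geq_minr _ _) (leq_trans ge_p (le_TXE p pP)).
Qed.

Lemma loewy_dexp j : I (loewy K E j) /\
  {in P, forall p, dexp (loewy K E j) p = minn (logn p r) j}.
Proof.
elim: j => [|j [iS dexpS]] /=.
  by split=> [|p pP]; rewrite ?dexp_K ?minn0 //; exact: interval_K.
have [iS' dexpS'] := socle_dexp iS; split=> // p pP.
by rewrite dexpS' // dexpS //; lia.
Qed.

Lemma leq_logn_alpha p : p \in P -> logn p r <= alpha.
Proof. by move=> pP; apply: (@leq_bigmax_seq _ _ xpredT (logn^~ r)). Qed.

Lemma alpha_leqP j : alpha <= j <-> {in P, forall p, logn p r <= j}.
Proof.
split=> [/bigmax_leqP_seq le_j p pP | le_j]; first exact: le_j.
by apply/bigmax_leqP_seq => p pP _; apply: le_j.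
Qed.

Lemma alpha_gt0 : 0 < alpha.
Proof.
have [p pP] := primes_degree_exists.
by apply: leq_trans (leq_logn_alpha pP); rewrite logn_gt0.
Qed.

Lemma loewy_eqE j : loewy K E j = E <-> alpha <= j.
Proof.
have [iS dexpS] := loewy_dexp j; rewrite alpha_leqP (interval_eq_dexp iS interval_E).
by split=> le_j p pP; have := le_j p pP; rewrite dexpS // /dexp; lia.
Qed.

Lemma loewy_length_alpha : loewy_length K E alpha.
Proof.
split=> [|j lt_j]; first exact/loewy_eqE.
by move/loewy_eqE; rewrite leqNgt lt_j.
Qed.

Lemma loewy_length_uniq n : loewy_length K E n -> n = alpha.
Proof.
case=> /loewy_eqE le_n min_n; apply/eqP; rewrite eqn_leq le_n andbT leqNgt.
by apply/negP=> /min_n; apply; apply/loewy_eqE.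
Qed.

Lemma dim_interval_ppow T p b : I T -> p \in P -> b <= logn p r ->
  \dim_K T = (p ^ b)%N <-> {in P, forall q, dexp T q = b * (q == p)}.
Proof.
move=> iT pP le_b; have p_pr : prime p by move: pP; rewrite mem_primes => /andP[].
have pb_r : p ^ b %| r by rewrite pfactor_dvdn // degree_gt0.
rewrite -{1}(pprod_logn degree_gt0 pb_r) (dim_interval_pprod _ iT).
by split=> dexpT q qP; rewrite dexpT // lognX logn_prime.
Qed.

Lemma dim_interval_prime T p : I T -> p \in P ->
  \dim_K T = p <-> {in P, forall q, dexp T q = (q == p)}.
Proof.
move=> iT pP; have le_1 : 1 <= logn p r by rewrite logn_gt0.
have := dim_interval_ppow iT pP le_1; rewrite expn1 => ->.
by split=> dexpT q qP; rewrite dexpT ?mul1n.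
Qed.

Lemma atom_K_dexp T : atom K E T <->
  I T /\ exists2 p0, p0 \in P & {in P, forall q, dexp T q = (q == p0)}.
Proof.
split=> [[minT sTE] | [iT [p0 p0P dexpT]]].
  have iT : I T by split=> //; exact: minT.1.1.
  have [p0 p0P dexpT] := (minimal_dexp interval_K iT).1 minT.
  by split=> //; exists p0 => // q qP; rewrite dexpT ?dexp_K.
split; last exact: iT.2.
by apply/(minimal_dexp interval_K iT); exists p0 => // q qP; rewrite dexpT ?dexp_K.
Qed.

Lemma atom_K_dim T : I T -> atom K E T <-> exists2 p, p \in P & \dim_K T = p.
Proof.
move=> iT; split=> [/atom_K_dexp[_ [p pP dexpT]] | [p pP /(dim_interval_prime iT pP)]].
  by exists p => //; apply/(dim_interval_prime iT pP).
by move=> dexpT; apply/atom_K_dexp; split=> //; exists p.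
Qed.

Lemma atom_K_prime p : p \in P ->
  exists A, (atom K E A /\ \dim_K A = p) /\ forall B, atom K E B -> \dim_K B = p -> B = A.
Proof.
move=> pP; have le_1 : 1 <= logn p r by rewrite logn_gt0.
have [iA dexpA] := field_ofP (delta_in_box le_1).
have dimA : \dim_K (field_of (fun q => 1 * (q == p))) = p.
  by apply/(dim_interval_prime iA pP) => q qP; rewrite dexpA ?mul1n.
exists (field_of (fun q => 1 * (q == p))); split.
  by split=> //; apply/(atom_K_dim iA); exists p.
move=> B /atom_K_dexp[iB _] /(dim_interval_prime iB pP) dexpB.
by apply/(interval_eq_dexp iB iA) => q qP; rewrite dexpA ?dexpB ?mul1n.
Qed.


Lemma socle_K_big_prodv (A : nat -> {subfield L}) :
  (forall p, p \in P -> atom K E (A p) /\ \dim_K (A p) = p) ->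
  (socle K E : {vspace L}) = (\big[@prodv F L/1%VS]_(p <- P) (A p : {vspace L}))%VS.
Proof.
move=> atomA; have [B defB] := big_prodv_aspace A P; rewrite -defB.
suff /socleE -> : is_socle K E B by [].
have sAB p : p \in P -> (A p <= B)%VS by move=> pP; rewrite defB subv_big_prodv.
have [p0 p0P] := primes_degree_exists; have [[[[sKA _] _] _] _] := atomA p0 p0P.
split; [exact: subv_trans sKA (sAB p0 p0P) | split=> [C atomC | T _ atoms_T]].
  have [iC _] := (atom_K_dexp C).1 atomC.
  have [p pP dimC] := (atom_K_dim iC).1 atomC.
  have [A' [_ uniqA']] := atom_K_prime pP; have [atomAp dimAp] := atomA p pP.
  by rewrite (uniqA' C atomC dimC) -(uniqA' _ atomAp dimAp) sAB.
by rewrite defB; apply: big_prodv_sub => p pP; apply: atoms_T; case: (atomA p pP).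
Qed.

Lemma dim_loewy j :
  \dim_K (loewy K E j) = (\prod_(p <- P) p ^ minn (logn p r) j)%N.
Proof.
have [iS dexpS] := loewy_dexp j.
exact/(dim_interval_pprod (fun p => minn (logn p r) j) iS).
Qed.

Lemma atom_loewy_dim j T : I T ->
  atom (loewy K E j) (loewy K E j.+1) T <->
  exists p0, [/\ p0 \in P, minn (logn p0 r) j < logn p0 r &
    \dim_K T = (\prod_(p <- P) p ^ (if p == p0 then (minn (logn p r) j).+1
                                               else minn (logn p r) j))%N].
Proof.
move=> iT; have [iS dexpS] := loewy_dexp j; have [iS' dexpS'] := loewy_dexp j.+1.
split=> [[/(minimal_dexp iS iT)[p0 p0P dexpT] /(interval_subv_dexp iT iS') le_S'] |
         [p0 [p0P lt_p0 /(dim_interval_pprod _ iT) dexpT]]].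
  exists p0; split=> //.
    by have := le_S' p0 p0P; rewrite dexpT // dexpS // dexpS' // eqxx; lia.
  apply/(dim_interval_pprod _ iT) => p pP; rewrite dexpT // dexpS //.
  by case: (p == p0); rewrite ?addn1 ?addn0.
split.
  apply/(minimal_dexp iS iT); exists p0 => // p pP; rewrite dexpT // dexpS //.
  by case: (p == p0); rewrite ?addn1 ?addn0.
apply/(interval_subv_dexp iT iS') => p pP; rewrite dexpT // dexpS' //.
by case: eqP => [->|_]; lia.
Qed.

Lemma interval_distributive T U V : I T -> I U -> I V ->
  (T :&: (U * V))%AS = ((T :&: U) * (T :&: V))%AS /\
  (T * (U :&: V))%AS = ((T * U) :&: (T * V))%AS.
Proof.
move=> iT iU iV; have [iTU iTV] := (interval_cap iT iU, interval_cap iT iV).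
have [iTU' iTV'] := (interval_prod iT iU, interval_prod iT iV).
have [iUV iUV'] := (interval_prod iU iV, interval_cap iU iV).
split.
  apply/(interval_eq_dexp (interval_cap iT iUV) (interval_prod iTU iTV)) => p pP.
  by rewrite (dexp_cap iT iUV) // (dexp_prod iU iV) // (dexp_prod iTU iTV) // !dexp_cap //; lia.
apply/(interval_eq_dexp (interval_prod iT iUV') (interval_cap iTU' iTV')) => p pP.
by rewrite (dexp_prod iT iUV') // (dexp_cap iU iV) // (dexp_cap iTU' iTV') // !dexp_prod //; lia.
Qed.

(* Distributivity holds in all of [K, E]; the hypothesis is only needed for complements. *)
Lemma boolean_dexp T U : I T -> I U ->
  {in P, forall p, dexp T p <= dexp U p <= (dexp T p).+1} -> boolean_ext T U.
Proof.
move=> iT iU thin_TU; split=> [X Y Z iX iY iZ | X iX].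
  by apply: interval_distributive; apply: (in_interval_trans iT iU).
have iX' := in_interval_trans iT iU iX; have [sTX sXU] := iX.
have le_TX := (interval_subv_dexp iT iX').1 sTX.
have le_XU := (interval_subv_dexp iX' iU).1 sXU.
have compl_box : in_box (fun p => dexp T p + dexp U p - dexp X p).
  by move=> p pP; have := dexp_in_box iU pP; have := le_TX p pP; lia.
have [Y iY dexpY] := interval_exists_dexp compl_box.
exists Y; split; [split|split].
- by apply/(interval_subv_dexp iT iY) => p pP; rewrite dexpY //; have := le_XU p pP; lia.
- by apply/(interval_subv_dexp iY iU) => p pP; rewrite dexpY //; have := le_TX p pP; lia.
- apply/(interval_eq_dexp (interval_cap iX' iY) iT) => p pP.
  rewrite dexp_cap // dexpY //.
  by have := le_TX p pP; have := le_XU p pP; have := thin_TU p pP; lia.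
apply/(interval_eq_dexp (interval_prod iX' iY) iU) => p pP; rewrite dexp_prod // dexpY //.
by have := le_TX p pP; have := le_XU p pP; have := thin_TU p pP; lia.
Qed.

Lemma boolean_loewy j : boolean_ext (loewy K E j) (loewy K E j.+1).
Proof.
have [iS dexpS] := loewy_dexp j; have [iS' dexpS'] := loewy_dexp j.+1.
by apply: boolean_dexp => // p pP; rewrite dexpS // dexpS' //; lia.
Qed.

(* A Pi-irreducible T is the compositum of its p-part and its p'-part, so its
   exponent vector is supported at a single prime. *)
Lemma pi_irreducible_dexp T : I T -> T <> K -> pi_irreducible K E T <->
  exists2 p, p \in P & exists b, [/\ 1 <= b, b <= logn p r &
    {in P, forall q, dexp T q = b * (q == p)}].
Proof.
move=> iT nTK; split=> [irrT | [p pP [b [b_gt0 le_b dexpT]]] T1 T2 iT1 iT2 defT].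
  have [p pP dexpT_gt0] : exists2 p, p \in P & 0 < dexp T p.
    have [p pP] := interval_strict_dexp interval_K iT iT.1 (nesym nTK).
    by rewrite dexp_K //; exists p.
  pose vp q := if q == p then dexp T q else 0.
  pose vp' q := if q == p then 0 else dexp T q.
  have vp_box : in_box vp by move=> q qP; rewrite /vp; case: ifP; rewrite ?dexp_in_box.
  have vp'_box : in_box vp' by move=> q qP; rewrite /vp'; case: ifP; rewrite ?dexp_in_box.
  have [[iTp dexpTp] [iTp' dexpTp']] := (field_ofP vp_box, field_ofP vp'_box).
  have defT : T = (field_of vp * field_of vp')%AS.
    apply/(interval_eq_dexp iT (interval_prod iTp iTp')) => q qP.
    by rewrite dexp_prod // dexpTp // dexpTp' // /vp /vp'; case: ifP; rewrite ?maxn0 ?max0n.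
  case: (irrT _ _ iTp iTp' defT) => eqT; last first.
    by move: dexpT_gt0; rewrite eqT dexpTp' // /vp' eqxx.
  exists p => //; exists (dexp T p); split=> //; first exact: dexp_in_box.
  move=> q qP; rewrite {1}eqT dexpTp // /vp.
  by case: eqP => [->|_]; rewrite ?muln1 ?muln0.
have dexp_max q : q \in P -> dexp T q = maxn (dexp T1 q) (dexp T2 q).
  by move=> qP; rewrite defT dexp_prod.
have [eq1|neq1] := eqVneq (dexp T1 p) b; [left|right];
  apply/(interval_eq_dexp iT _) => // q qP; have := dexp_max q qP; rewrite dexpT //;
  case: (eqVneq q p) => [->|_]; rewrite ?muln1 ?muln0; lia.
Qed.

Lemma pi_irreducible_dim T : I T -> T <> K -> pi_irreducible K E T <->
  exists2 p, p \in P & exists b, [/\ 1 <= b, b <= logn p r & \dim_K T = (p ^ b)%N].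
Proof.
move=> iT nTK; rewrite (pi_irreducible_dexp iT nTK).
by split=> -[p pP [b [b_gt0 le_b dimT]]]; exists p => //; exists b;
  split=> //; apply/(dim_interval_ppow iT pP le_b).
Qed.

Lemma card_interval : card_subfields I (size (divisors r)).
Proof.
have divisor_box d : d \in divisors r -> in_box (logn^~ d).
  rewrite -dvdn_divisors ?degree_gt0 // => d_r p _.
  by apply: dvdn_leq_log; rewrite ?degree_gt0.
have dim_of d : d \in divisors r -> \dim_K (field_of (logn^~ d)) = d.
  move=> d_div; have [iT dexpT] := field_ofP (divisor_box d d_div).
  rewrite -dvdn_divisors ?degree_gt0 // in d_div.
  by rewrite -{2}(pprod_logn degree_gt0 d_div); apply/(dim_interval_pprod _ iT).
exists [seq field_of (logn^~ d) | d <- divisors r]; split; [|split; last exact: size_map].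
  rewrite map_inj_in_uniq ?divisors_uniq // => d1 d2 d1_div d2_div eq12.
  by rewrite -(dim_of d1) // -(dim_of d2) // eq12.
move=> T; split=> [/mapP[d d_div ->] | iT]; first exact: (field_ofP (divisor_box d d_div)).1.
have dT_div : \dim_K T \in divisors r.
  by rewrite -dvdn_divisors ?degree_gt0 ?dim_interval_dvdn.
apply/mapP; exists (\dim_K T) => //; have [iT' dexpT'] := field_ofP (divisor_box _ dT_div).
by apply/(interval_eq_dexp iT iT') => p pP; rewrite dexpT'.
Qed.

Lemma card_atoms_loewy j : card_subfields (atom (loewy K E j) (loewy K E j.+1))
  (count (fun p => j < logn p r) P).
Proof.
have [iS dexpS] := loewy_dexp j; have [iS' dexpS'] := loewy_dexp j.+1.
pose w p q := minn (logn q r) j + (q == p).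
have w_box p : j < logn p r -> in_box (w p).
  by move=> lt_j q qP; rewrite /w; case: eqP => [->|_]; lia.
have atom_w p : p \in P -> j < logn p r ->
    atom (loewy K E j) (loewy K E j.+1) (field_of (w p)).
  move=> pP lt_j; have [iT dexpT] := field_ofP (w_box p lt_j); split.
    by apply/(minimal_dexp iS iT); exists p => // q qP; rewrite dexpT // dexpS.
  apply/(interval_subv_dexp iT iS') => q qP; rewrite dexpT // dexpS' // /w.
  by case: eqP => [->|_]; lia.
exists [seq field_of (w p) | p <- [seq p <- P | j < logn p r]]; split; [|split].
- rewrite map_inj_in_uniq ?filter_uniq ?primes_uniq // => p1 p2.
  rewrite !mem_filter => /andP[lt1 p1P] /andP[lt2 p2P] eq12.
  have [[_ dexp1] [_ dexp2]] := (field_ofP (w_box _ lt1), field_ofP (w_box _ lt2)).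
  by have := dexp1 p1 p1P; rewrite eq12 dexp2 // /w eqxx; case: eqP => // _; lia.
- move=> T; split=> [/mapP[p] | [minT sTS']].
    by rewrite mem_filter => /andP[lt_j pP] ->; apply: atom_w.
  have iT : I T by apply: (in_interval_trans iS iS'); split=> //; exact: minT.1.1.
  have [p0 p0P dexpT] := (minimal_dexp iS iT).1 minT.
  have lt_j : j < logn p0 r.
    have := (interval_subv_dexp iT iS').1 sTS' p0 p0P.
    by rewrite dexpT // dexpS // dexpS' // eqxx; lia.
  apply/mapP; exists p0; first by rewrite mem_filter lt_j.
  have [iW dexpW] := field_ofP (w_box _ lt_j).
  by apply/(interval_eq_dexp iT iW) => q qP; rewrite dexpW // dexpT // dexpS.
- by rewrite size_map size_filter.
Qed.

Lemma card_pi_irreducible :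
  card_subfields (fun T => [/\ I T, T <> K & pi_irreducible K E T]) (\sum_(p <- P) logn p r)%N.
Proof.
pose w (p b q : nat) := b * (q == p).
have w_box p b : b \in iota 1 (logn p r) -> in_box (w p b).
  by rewrite mem_iota add1n ltnS => /andP[_]; exact: delta_in_box.
have pi_w p b : p \in P -> b \in iota 1 (logn p r) ->
    [/\ I (field_of (w p b)), field_of (w p b) <> K & pi_irreducible K E (field_of (w p b))].
  move=> pP b_iota; have [iT dexpT] := field_ofP (w_box p b b_iota).
  move: b_iota; rewrite mem_iota add1n ltnS => /andP[b_gt0 le_b].
  have nTK : field_of (w p b) <> K.
    move=> eqK; have := dexpT p pP; rewrite eqK dexp_K // /w eqxx muln1 => b0.
    by rewrite -b0 in b_gt0.
  by split=> //; apply/(pi_irreducible_dexp iT nTK); exists p => //; exists b.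
exists [seq field_of (w p b) | p <- P, b <- iota 1 (logn p r)]; split; [|split].
- apply: allpairs_uniq_dep; rewrite ?primes_uniq //; first by move=> p _; exact: iota_uniq.
  move=> [p1 b1] [p2 b2] /allpairsPdep[x1 [y1 [x1P y1_iota [-> ->]]]].
  move=> /allpairsPdep[x2 [y2 [x2P y2_iota [-> ->]]]] /= eq12.
  have [_ dexp1] := field_ofP (w_box _ _ y1_iota).
  have [_ dexp2] := field_ofP (w_box _ _ y2_iota).
  have := dexp1 x1 x1P; rewrite eq12 dexp2 // /w eqxx muln1.
  move: y1_iota; rewrite mem_iota => /andP[y1_gt0 _].
  case: eqP => [eq_x|_] /=; last by rewrite muln0 => y1_0; rewrite -y1_0 in y1_gt0.
  by subst x2; rewrite muln1 => ->.
- move=> T; split=> [/allpairsPdep[p [b [pP b_iota ->]]] | [iT nTK]]; first exact: pi_w.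
  case/(pi_irreducible_dexp iT nTK)=> p pP [b [b_gt0 le_b dexpT]].
  have b_iota : b \in iota 1 (logn p r) by rewrite mem_iota b_gt0 add1n ltnS.
  have [iW dexpW] := field_ofP (w_box _ _ b_iota).
  have -> : T = field_of (w p b).
    by apply/(interval_eq_dexp iT iW) => q qP; rewrite dexpW // dexpT.
  exact: (allpairs_f_dep (fun p b => field_of (w p b)) pP b_iota).
- rewrite size_allpairs_dep sumnE big_map; apply: eq_bigr => p _; exact: size_iota.
Qed.

Lemma sum_dexp_strict T U : I T -> I U -> sub_strict T U ->
  (\sum_(p <- P) dexp T p < \sum_(p <- P) dexp U p)%N.
Proof.
move=> iT iU [sTU nTU]; have le_TU := (interval_subv_dexp iT iU).1 sTU.
have [p0 p0P lt_p0] := interval_strict_dexp iT iU sTU nTU.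
rewrite !(bigD1_seq p0) ?primes_uniq //= -addSn; apply: leq_add => //.
by rewrite big_seq_cond [X in _ <= X]big_seq_cond; apply: leq_sum => p /andP[pP _]; apply: le_TU.
Qed.

Lemma sum_dexp_le T : I T -> (\sum_(p <- P) dexp T p <= \sum_(p <- P) logn p r)%N.
Proof.
by move=> iT; rewrite big_seq [X in _ <= X]big_seq; apply: leq_sum => p; apply: dexp_in_box.
Qed.

Lemma exists_chain_to v n : in_box v -> (\sum_(p <- P) v p)%N = n ->
  exists c : nat -> {subfield L}, [/\ forall i, i <= n -> I (c i),
    forall i, i < n -> sub_strict (c i) (c i.+1) & c n = field_of v].
Proof.
elim: n v => [|n IHn] v v_box sum_v.
  by exists (fun=> field_of v); split=> // i _; exact: (field_ofP v_box).1.
have [p pP v_gt0] : exists2 p, p \in P & 0 < v p.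
  have [/hasP // | /hasPn v0] := boolP (has (fun p => 0 < v p) P).
  move: sum_v; rewrite big1_seq // => p /andP[_ pP].
  by apply/eqP; rewrite -leqn0 leqNgt v0.
pose v' q := v q - (q == p).
have v'_box : in_box v' by move=> q qP; exact: leq_trans (leq_subr _ _) (v_box q qP).
have sum_v' : (\sum_(q <- P) v' q)%N = n.
  move: sum_v; rewrite !(bigD1_seq p) ?primes_uniq //= /v' eqxx.
  rewrite [in X in _ -> X](eq_bigr v); last by move=> q /negbTE->; rewrite subn0.
  lia.
have [c [iC strictC lastC]] := IHn v' v'_box sum_v'.
exists (fun i => if i <= n then c i else field_of v); split.
- by move=> i _; case: ifP => [/iC //|_]; exact: (field_ofP v_box).1.
- move=> i; rewrite ltnS => le_in; case: (ltnP i n) => [lt_i | ge_i].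
    by rewrite (ltnW lt_i); exact: strictC.
  have -> : i = n by apply/eqP; rewrite eqn_leq le_in.
  have [[iV' dexpV'] [iV dexpV]] := (field_ofP v'_box, field_ofP v_box).
  rewrite leqnn lastC; split.
    by apply/(interval_subv_dexp iV' iV) => q qP; rewrite dexpV' // dexpV // leq_subr.
  by move=> eqV; have := dexpV' p pP; rewrite eqV dexpV // /v' eqxx; lia.
- by rewrite ltnn.
Qed.

Lemma lattice_length_interval : lattice_length K E (\sum_(p <- P) logn p r)%N.
Proof.
split=> [|l [c [iC strictC]]].
  have [c [iC strictC _]] := @exists_chain_to (logn^~ r) _ (fun p _ => leqnn _) erefl.
  by exists c.
suff le_sum i : i <= l -> i <= \sum_(p <- P) dexp (c i) p.
  exact: leq_trans (le_sum l (leqnn l)) (sum_dexp_le (iC l (leqnn l))).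
elim: i => // i IHi lt_il.
have le_il := ltnW lt_il.
exact: leq_ltn_trans (IHi le_il) (sum_dexp_strict (iC i le_il) (iC i.+1 lt_il) (strictC i lt_il)).
Qed.

(* The subfield of degree p has no complement when p^2 divides r. *)
Lemma boolean_alpha1 : boolean_ext K E -> alpha = 1.
Proof.
case=> _ complK; apply/eqP; rewrite eqn_leq alpha_gt0 andbT; apply/alpha_leqP => p pP.
rewrite leqNgt; apply/negP => lt1_p.
have le1_p : 1 <= logn p r by rewrite logn_gt0.
have [iV dexpV] := field_ofP (delta_in_box le1_p).
have [V' [iV' [capV prodV]]] := complK _ iV.
have := dexp_cap iV iV' pP; have := dexp_prod iV iV' pP.
by rewrite capV prodV dexp_K // dexpV // eqxx /dexp; lia.
Qed.

Lemma alpha1_boolean : alpha = 1 -> boolean_ext K E.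
Proof.
move=> alpha1; apply: boolean_dexp interval_K interval_E _ => p pP.
by rewrite dexp_K //; have := leq_logn_alpha pP; rewrite alpha1 /dexp; lia.
Qed.

Lemma chain_primes1 : chain_ext K E -> size P = 1.
Proof.
move=> chainKE; apply/eqP/negP => /negP size_P.
have [p pP] := primes_degree_exists.
have [q qP neq_qp] := uniq_exists_neq pP (primes_uniq r) size_P.
have le1_p : 1 <= logn p r by rewrite logn_gt0.
have le1_q : 1 <= logn q r by rewrite logn_gt0.
have [[iV dexpV] [iW dexpW]] := (field_ofP (delta_in_box le1_p), field_ofP (delta_in_box le1_q)).
case: (chainKE _ _ iV iW) =>
  [/(interval_subv_dexp iV iW) le_VW | /(interval_subv_dexp iW iV) le_WV].
  by have := le_VW p pP; rewrite dexpV // dexpW // eqxx eq_sym (negbTE neq_qp).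
by have := le_WV q qP; rewrite dexpV // dexpW // eqxx (negbTE neq_qp).
Qed.

Lemma primes1_chain : size P = 1 -> chain_ext K E.
Proof.
case/size_seq1=> p defP T U iT iU; have single q : q \in P -> q = p.
  by rewrite defP inE => /eqP.
case: (leqP (dexp T p) (dexp U p)) => [le_p | /ltnW le_p]; [left|right];
  by apply/interval_subv_dexp => // q /single ->.
Qed.

Lemma P_ext_primes1_or_alpha1 : P_ext K E -> size P = 1 \/ alpha = 1.
Proof.
case=> n [/loewy_length_uniq -> coverKE].
have [|size_P] := eqVneq (size P) 1; [by left | right].
apply/eqP; rewrite eqn_leq alpha_gt0 andbT; apply/alpha_leqP => p pP.
rewrite leqNgt; apply/negP => lt1_p.
have [q qP neq_qp] := uniq_exists_neq pP (primes_uniq r) size_P.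
have q_gt0 : 0 < logn q r by rewrite logn_gt0.
have [iT dexpT] := field_ofP (delta_in_box lt1_p).
have [j [_ [sST sTS']]] := coverKE _ iT.
have [[iS dexpS] [iS' dexpS']] := (loewy_dexp j, loewy_dexp j.+1).
have := (interval_subv_dexp iS iT).1 sST q qP.
rewrite dexpS // dexpT // (negbTE neq_qp) muln0.
have := (interval_subv_dexp iT iS').1 sTS' p pP; rewrite dexpS' // dexpT // eqxx muln1.
lia.
Qed.

(* Each subfield lies in the first layer when alpha = 1, and in the layer
   indexed by its (truncated) exponent when r is a prime power. *)
Lemma primes1_or_alpha1_P_ext : size P = 1 \/ alpha = 1 -> P_ext K E.
Proof.
move=> small; exists alpha; split=> [|T iT]; first exact: loewy_length_alpha.
case: small => [/size_seq1[p defP] | alpha1]; last first.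
  exists 0; split; first by rewrite alpha1.
  split; first exact: iT.1.
  have [iS' dexpS'] := loewy_dexp 1; apply/(interval_subv_dexp iT iS') => p pP.
  by rewrite dexpS' //; have := dexp_in_box iT pP; have := leq_logn_alpha pP; lia.
have pP : p \in P by rewrite defP mem_head.
have alphaE : alpha = logn p r by rewrite defP big_seq1.
have single q : q \in P -> q = p by rewrite defP inE => /eqP.
have logn_gt0 : 0 < logn p r by rewrite logn_gt0.
pose j := minn (dexp T p) (logn p r).-1.
have [[iS dexpS] [iS' dexpS']] := (loewy_dexp j, loewy_dexp j.+1).
have le_Tp := dexp_in_box iT pP.
exists j; split; first by rewrite alphaE /j; lia.
split; [apply/(interval_subv_dexp iS iT) | apply/(interval_subv_dexp iT iS')];
  by move=> q /single ->; rewrite ?dexpS ?dexpS' // /j; lia.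
Qed.

Lemma boolean_or_chainE : boolean_ext K E \/ chain_ext K E <-> size P = 1 \/ alpha = 1.
Proof.
split=> [[/boolean_alpha1 | /chain_primes1] | [/primes1_chain | /alpha1_boolean]];
  by [right | left].
Qed.

Lemma P_extE : P_ext K E <-> boolean_ext K E \/ chain_ext K E.
Proof.
rewrite boolean_or_chainE.
by split=> [/P_ext_primes1_or_alpha1 | /primes1_or_alpha1_P_ext].
Qed.

End CyclicExtension.

Theorem theorem8p131 (F : fieldType) (L : splittingFieldType F) (K E : {subfield L}) :
  (K <= E)%VS -> K <> E -> galois K E -> cyclic 'Gal(E / K) ->
  let r := (\dim_K E)%N in
  let alpha := (\max_(p <- primes r) logn p r)%N in
  let beta (j p : nat) := if (logn p r < j)%N then logn p r else j in
  ((* (1) *)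
      (forall p, p \in primes r ->
         exists A : {subfield L}, (atom K E A /\ \dim_K A = p) /\
           forall B : {subfield L}, atom K E B -> \dim_K B = p -> B = A)
      /\ (forall T : {subfield L}, in_interval K E T ->
            (atom K E T <-> exists2 p, p \in primes r & \dim_K T = p))) /\
      ((* (2) *)
      (forall A : nat -> {subfield L},
         (forall p, p \in primes r -> atom K E (A p) /\ \dim_K (A p) = p) ->
         (socle K E : {vspace L}) = (\big[@prodv F L/1%VS]_(p <- primes r) (A p : {vspace L}))%VS)) /\
      (* (3) and (4) *)
      ((exists n, loewy_length K E n) /\
      (forall n, loewy_length K E n ->
         [/\ forall j, (j <= n)%N ->
               \dim_K (loewy K E j) = (\prod_(p <- primes r) p ^ beta j p)%N,
             forall j, (j < n)%N -> forall T : {subfield L}, in_interval K E T ->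
               (atom (loewy K E j) (loewy K E j.+1) T <->
                exists p0, [/\ p0 \in primes r, (beta j p0 < logn p0 r)%N &
                  \dim_K T = (\prod_(p <- primes r)
                                p ^ (if p == p0 then (beta j p).+1 else beta j p))%N]),
             alpha = n &
             forall j, (j < n)%N -> boolean_ext (loewy K E j) (loewy K E j.+1)])) /\
      (* (5) *)
      (forall T : {subfield L}, in_interval K E T -> T <> K ->
         (pi_irreducible K E T <->
          exists2 p, p \in primes r &
            exists b, [/\ (1 <= b)%N, (b <= logn p r)%N & \dim_K T = (p ^ b)%N])) /\
      (* (6) *)
      [/\ card_subfields (in_interval K E) (size (divisors r)),
          size (divisors r) = (\prod_(p <- primes r) (logn p r).+1)%N,
          (exists c : nat -> nat,
             (forall j, (j < alpha)%N ->
                card_subfields (atom (loewy K E j) (loewy K E j.+1)) (c j)) /\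
             (\sum_(j < alpha) c j)%N = (\sum_(p <- primes r) logn p r)%N),
          lattice_length K E (\sum_(p <- primes r) logn p r)%N &
          card_subfields (fun T : {subfield L} => [/\ in_interval K E T, T <> K & pi_irreducible K E T])
            (\sum_(p <- primes r) logn p r)%N] /\
      (* (7) *)
      (P_ext K E <-> boolean_ext K E \/ chain_ext K E) /\
      (boolean_ext K E \/ chain_ext K E <-> size (primes r) = 1%N \/ alpha = 1%N).
Proof.
move=> sKE nKE galKE cycG r alpha beta.
have alphaE : forall n, loewy_length K E n -> n = alpha := loewy_length_uniq sKE galKE cycG.
split; first by split=> [p | T]; [exact: atom_K_prime | exact: atom_K_dim].
split; first exact: socle_K_big_prodv.
split.
  split=> [|n /alphaE ->]; first by exists alpha; apply: loewy_length_alpha.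
  split=> // [j _ | j _ T | j _];
    [exact: dim_loewy | exact: atom_loewy_dim | exact: boolean_loewy].
split; first exact: pi_irreducible_dim.
split.
  split; [exact: card_interval | exact/size_divisors/degree_gt0 | |
          exact: lattice_length_interval | exact: card_pi_irreducible].
  exists (fun j => count (fun p => j < logn p r) (primes r)); split.
    by move=> j _; apply: card_atoms_loewy.
  exact: sum_count_ltn_logn.
by split; [exact: P_extE | exact: boolean_or_chainE].
Qed.
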